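(* Let $\mathcal{P}$ be a (weakly connected) collection of cells whose connected components are $\mathcal{P}_1,\dots,\mathcal{P}_n$. For each $i$ let $\tilde{r}_{\mathcal{P}_i}(t)$ be the switching rook polynomial of $\mathcal{P}_i$. Then $\prod_{i=1}^n \tilde{r}_{\mathcal{P}_i}(t)$ is the switching rook polynomial of $\mathcal{P}$.
   Context: For $a=(a_1,a_2)\le b=(b_1,b_2)$ in $\mathbb{Z}^2$ (componentwise order), the interval $[a,b]$ is $\{(m,n)\in\mathbb{Z}^2: a_1\le m\le b_1,\ a_2\le n\le b_2\}$; it is proper if $a_1<b_1$ and $a_2<b_2$. A cell is a proper interval $[a,a+(1,1)]$, with lower left corner $a$; its vertices are its four points. A collection of cells is a finite non-empty set $\mathcal{P}$ of cells; it is weakly connected if any two of its cells are joined by a sequence of cells of $\mathcal{P}$ in which consecutive cells share a vertex (throughout, ''collection of cells'' means a weakly connected one). A path in $\mathcal{P}$ is a sequence of distinct cells of $\mathcal{P}$, consecutive ones sharing an edge; a polyomino is a collection of cells in which any two cells are joined by a path; a connected component of $\mathcal{P}$ is a subset which is a polyomino and is maximal with this property. An inner interval of $\mathcal{P}$ is a proper interval all of whose cells belong to $\mathcal{P}$. A cell interval of $\mathcal{P}$ is a set of cells of $\mathcal{P}$ whose lower left corners form the points of an interval $[(i,j),(k,l)]$ with $i=k$ or $j=l$ (vertical or horizontal). Two rooks placed in cells of $\mathcal{P}$ are non-attacking if they do not lie in a common horizontal or vertical cell interval contained in $\mathcal{P}$; a $k$-rook configuration is a set of $k$ pairwise non-attacking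 rooks in cells of $\mathcal{P}$, and $r(\mathcal{P})$ is the maximum such $k$. Two non-attacking rooks are switching if they occupy cells $A,B$ with lower left corners $(i,j),(k,l)$, $i\ne k$, $j\neq l$, such that all cells of the inner interval spanned by $A$ and $B$ lie in $\mathcal{P}$ (i.e. $A,B$ are diagonal or anti-diagonal cells of a rectangle of $\mathcal{P}$); a switch replaces them by rooks in the cells with lower left corners $(i,l)$ and $(k,j)$. Two $k$-rook configurations are equivalent if one is obtained from the other by a finite sequence of switches. If $\tilde r_k$ is the number of equivalence classes of $k$-rook configurations ($\tilde r_0=1$), the switching rook polynomial of $\mathcal{P}$ is $\tilde r_{\mathcal{P}}(t)=\sum_{k=0}^{r(\mathcal{P})}\tilde r_k t^k$. *)

From HB Require Import structures.
From mathcomp Require Import all_boot all_order all_algebra.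
From mathcomp Require Import finmap.
From mathcomp Require Import boolp.
From Stdlib Require Import Relations.
Set Implicit Arguments. Unset Strict Implicit. Unset Printing Implicit Defensive.
Import Order.TTheory GRing.Theory Num.Theory.
Local Open Scope fset_scope.
Local Open Scope ring_scope.

(* A cell is identified with its lower left corner a; the cell is [a, a+(1,1)]. *)
Definition cell := (int * int)%type.

Definition share_vertex (A B : cell) : bool :=
  (`|A.1 - B.1| <= 1) && (`|A.2 - B.2| <= 1).

Definition share_edge (A B : cell) : bool :=
  ((A.1 == B.1) && (`|A.2 - B.2| == 1)) || ((A.2 == B.2) && (`|A.1 - B.1| == 1)).

Definition weakly_connected (P : {fset cell}) : Prop :=
  forall A B, A \in P -> B \in P ->
    exists s : seq cell, [/\ all (fun C => C \in P) s,
                             path share_vertex A s & last A s = B].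

Definition collection (P : {fset cell}) : Prop :=
  P != fset0 /\ weakly_connected P.

Definition polyomino (P : {fset cell}) : Prop :=
  collection P /\
  forall A B, A \in P -> B \in P ->
    exists s : seq cell, [/\ all (fun C => C \in P) s, uniq (A :: s),
                             path share_edge A s & last A s = B].

Definition connected_component (P Q : {fset cell}) : Prop :=
  [/\ Q `<=` P, polyomino Q &
      forall Q' : {fset cell}, Q `<=` Q' -> Q' `<=` P -> polyomino Q' -> Q' = Q].

Definition row_interval_in (P : {fset cell}) (j a b : int) : Prop :=
  forall x : int, Num.min a b <= x <= Num.max a b -> (x, j) \in P.

Definition col_interval_in (P : {fset cell}) (i a b : int) : Prop :=
  forall y : int, Num.min a b <= y <= Num.max a b -> (i, y) \in P.

Definition attacking (P : {fset cell}) (A B : cell) : Prop :=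
  (A.2 = B.2 /\ row_interval_in P A.2 A.1 B.1) \/
  (A.1 = B.1 /\ col_interval_in P A.1 A.2 B.2).

Definition rook_config (P C : {fset cell}) : Prop :=
  C `<=` P /\ forall A B, A \in C -> B \in C -> A != B -> ~ attacking P A B.

Definition rect_in (P : {fset cell}) (A B : cell) : Prop :=
  forall x y : int,
    Num.min A.1 B.1 <= x <= Num.max A.1 B.1 ->
    Num.min A.2 B.2 <= y <= Num.max A.2 B.2 -> (x, y) \in P.

Definition switch_step (P : {fset cell}) (C C' : {fset cell}) : Prop :=
  exists A B : cell,
    [/\ A \in C, B \in C, (A.1 != B.1) && (A.2 != B.2), rect_in P A B &
        C' = ((C `\ A) `\ B) `|` [fset (A.1, B.2); (B.1, A.2)]].

Definition switch_equiv (P : {fset cell}) : {fset cell} -> {fset cell} -> Prop :=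
  clos_refl_trans _ (switch_step P).

Definition rook_configs (P : {fset cell}) (k : nat) : {fset {fset cell}} :=
  [fset C in fpowerset P | `[< rook_config P C >] && (#|` C| == k)%N].

Definition rook_number (P : {fset cell}) : nat :=
  \max_(k < (#|` P|).+1 | rook_configs P k != fset0) k.

Definition switch_class (P : {fset cell}) (k : nat) (C : {fset cell}) :
  {fset {fset cell}} :=
  [fset D in rook_configs P k | `[< switch_equiv P C D >]].

Definition switch_rook_count (P : {fset cell}) (k : nat) : nat :=
  #|` [fset S in fpowerset (rook_configs P k) |
        `[< exists2 C, C \in rook_configs P k & S = switch_class P k C >]] |.

Definition switching_rook_poly (P : {fset cell}) : {poly int} :=
  \sum_(k < (rook_number P).+1) (switch_rook_count P k)%:R *: 'X^k.

From HB Require Import structures.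
From mathcomp Require Import all_boot all_order all_algebra.
From mathcomp Require Import finmap boolp zify.
From Stdlib Require Import Relations.
Set Implicit Arguments. Unset Strict Implicit. Unset Printing Implicit Defensive.
Import Order.TTheory GRing.Theory Num.Theory.
Local Open Scope fset_scope.

(* Call two sets of cells separated when no cell of one equals or shares an
   edge with a cell of the other; distinct connected components are separated.
   For separated P1 and P2, a horizontal or vertical cell interval, or an inner
   interval, of P1 ∪ P2 that contains a cell of P1 lies entirely in P1: walking
   along it one never steps across an edge into P2. Hence the rook
   configurations of P1 ∪ P2 are exactly the unions C1 ∪ C2 of configurations of
   P1 and P2, and every switch happens inside P1 or inside P2. So the switching
   classes of k-rook configurations of P1 ∪ P2 are in bijection with the pairs
   of classes of i- and (k-i)-rook configurations of P1 and P2, i <= k: the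
   class counts convolve and the switching rook polynomials multiply. *)

Lemma fsetI_cover (K : choiceType) (C P1 P2 : {fset K}) :
  C `<=` P1 `|` P2 -> C = (C `&` P1) `|` (C `&` P2).
Proof. by move=> CP; rewrite -fsetIUr (fsetIidPl CP). Qed.

Lemma clos_rt_map (T U : Type) (R : relation T) (S : relation U) (f : T -> U) :
  (forall x y, R x y -> clos_refl_trans _ S (f x) (f y)) ->
  forall x y, clos_refl_trans _ R x y -> clos_refl_trans _ S (f x) (f y).
Proof.
move=> mapR x y; elim=> {x y} [x y /mapR //|x|x y z _ fxy _ fyz]; first exact: rt_refl.
exact: rt_trans fxy fyz.
Qed.

Lemma size_undup_map_ker (T U V : eqType) (f : T -> U) (g : T -> V) (s : seq T) :
  {in s &, forall x y, (f x == f y) = (g x == g y)} ->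
  size (undup (map f s)) = size (undup (map g s)).
Proof.
elim: s => [//|x s IH] ker /=.
have ker_s : {in s &, forall x y, (f x == f y) = (g x == g y)}.
  by move=> y z ys zs; apply: ker; rewrite inE ?ys ?zs orbT.
have -> : (f x \in map f s) = (g x \in map g s).
  apply/mapP/mapP => -[y ys eq_xy]; exists y => //; apply/eqP.
  - by rewrite -ker ?inE ?eqxx ?ys ?orbT // eq_xy.
  - by rewrite ker ?inE ?eqxx ?ys ?orbT // eq_xy.
by case: (g x \in map g s); rewrite /= IH.
Qed.

Lemma card_imfset_ker (T U V : choiceType) (f : T -> U) (g : T -> V) (A : {fset T}) :
  {in A &, forall x y, (f x == f y) = (g x == g y)} ->
  #|` [fset f x | x in A]| = #|` [fset g x | x in A]|.
Proof.
have cardE (W : choiceType) (h : T -> W) :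
    #|` [fset h x | x in A]| = size (undup (map h A)).
  rewrite -card_fseq; congr #|` _|; apply/fsetP => y; rewrite in_fset /=.
  by apply/imfsetP/mapP => -[x xA ->]; exists x.
by move=> ker; rewrite !cardE; apply: size_undup_map_ker.
Qed.

Lemma card_fset_sigma (T U : choiceType) (n : nat) (A : nat -> {fset T})
    (B : nat -> {fset U}) (X : {fset nat * (T * U)}) :
  (forall i x y, ((i, (x, y)) \in X) = [&& (i < n)%N, x \in A i & y \in B i]) ->
  #|` X| = (\sum_(i < n) #|` A i| * #|` B i|)%N.
Proof.
move=> memX.
pose pairs i := [seq (x, y) | x <- enum_fset (A i), y <- enum_fset (B i)].
pose t := [seq (i, u) | i <- iota 0 n, u <- pairs i].
have -> : X = [fset u in t].
  apply/fsetP => -[i [x y]]; rewrite memX in_fset /=.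
  apply/and3P/allpairsPdep => [[lt_in xA yB]|[j [u [jn /allpairsP[[x' y'] /=]]]]].
    exists i, (x, y); split=> //; first by rewrite mem_iota.
    by apply/allpairsP; exists (x, y).
  by case=> x'A y'B -> [-> -> ->]; split=> //; move: jn; rewrite mem_iota.
rewrite card_fseq undup_id; last first.
  apply: allpairs_uniq_dep => [|i _|[i u] [j v] _ _ /= [-> ->] //]; first exact: iota_uniq.
  by apply: allpairs_uniq => [||[x y] [x' y'] _ _ /= [-> ->]].
rewrite /t size_allpairs_dep sumnE big_map -{1}(subn0 n) big_mkord.
by apply: eq_bigr => i _; rewrite size_allpairs.
Qed.

Definition separated (P1 P2 : {fset cell}) : Prop :=
  forall A B, A \in P1 -> B \in P2 -> (A != B) && ~~ share_edge A B.

Definition edge_closed (P Q : {fset cell}) : Prop :=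
  forall A B, A \in Q -> B \in P -> share_edge A B -> B \in Q.

Section Geometry.
Local Open Scope ring_scope.

Lemma share_edgeC A B : share_edge A B = share_edge B A.
Proof. by rewrite /share_edge !(eq_sym A.1) !(eq_sym A.2) distrC (distrC A.1). Qed.

Lemma share_edge_row j x : share_edge (x, j) (x + 1, j).
Proof. by rewrite /share_edge /= eqxx; apply/orP; right; lia. Qed.

Lemma share_edge_col i y : share_edge (i, y) (i, y + 1).
Proof. by rewrite /share_edge /= eqxx; apply/orP; left; lia. Qed.

Lemma edge_closed_line P Q (f : int -> cell) (lo hi x y : int) :
  edge_closed P Q -> (forall z, share_edge (f z) (f (z + 1))) ->
  (forall z, lo <= z <= hi -> f z \in P) ->
  lo <= x <= hi -> lo <= y <= hi -> (f x \in Q) = (f y \in Q).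
Proof.
move=> closedQ edge_f inP.
have step z : lo <= z -> z + 1 <= hi -> (f z \in Q) = (f (z + 1) \in Q).
  move=> lo_z z_hi; apply/idP/idP => inQ; apply: closedQ inQ _ _.
  - by apply: inP; lia.
  - exact: edge_f.
  - by apply: inP; lia.
  - by rewrite share_edgeC.
have walk (n : nat) z : lo <= z -> z + n%:Z <= hi -> (f z \in Q) = (f (z + n%:Z) \in Q).
  elim: n => [|n IH] lo_z z_hi; first by rewrite addr0.
  have -> : z + n.+1%:Z = z + n%:Z + 1 by lia.
  by rewrite IH ?(step (z + n%:Z)); lia.
wlog le_xy : x y / x <= y => [hwlog hx hy|hx hy].
  by case: (lerP x y) => [|/ltW] le; [|symmetry]; apply: hwlog.
have -> : y = x + (absz (y - x))%:Z by lia.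
by apply: walk; lia.
Qed.

Lemma row_interval_closed P Q j a b : edge_closed P Q -> (a, j) \in Q ->
  row_interval_in P j a b -> row_interval_in Q j a b.
Proof.
move=> closedQ aQ row x hx; rewrite -(edge_closed_line (f := fun z => (z, j)) closedQ
  (@share_edge_row j) row (_ : Num.min a b <= a <= Num.max a b) hx) //; lia.
Qed.

Lemma col_interval_closed P Q i a b : edge_closed P Q -> (i, a) \in Q ->
  col_interval_in P i a b -> col_interval_in Q i a b.
Proof.
move=> closedQ aQ col y hy; rewrite -(edge_closed_line (f := fun z => (i, z)) closedQ
  (@share_edge_col i) col (_ : Num.min a b <= a <= Num.max a b) hy) //; lia.
Qed.

Lemma attacking_closed P Q A B : edge_closed P Q -> A \in Q ->
  attacking P A B -> attacking Q A B.
Proof.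
case: A => a1 a2 closedQ AQ [[/= eq2 row]|[/= eq1 col]].
- by left; split=> //; apply: row_interval_closed row.
- by right; split=> //; apply: col_interval_closed col.
Qed.

Lemma attacking_mem Q A B : attacking Q A B -> B \in Q.
Proof.
case: B => b1 b2 [[/= -> row]|[/= -> col]].
- by apply: row; lia.
- by apply: col; lia.
Qed.

Lemma attacking_sub P Q A B : Q `<=` P -> attacking Q A B -> attacking P A B.
Proof.
move=> /fsubsetP QP [[eq2 row]|[eq1 col]]; [left|right]; split=> // z hz.
- exact/QP/row.
- exact/QP/col.
Qed.

Lemma rect_in_closed P Q A B : edge_closed P Q -> A \in Q ->
  rect_in P A B -> rect_in Q A B.
Proof.
case: A => a1 a2 closedQ AQ rect x y /= hx hy.
have rowQ : row_interval_in Q a2 a1 B.1.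
  by apply: row_interval_closed closedQ AQ _ => z hz; apply: rect => /=; lia.
have colQ : col_interval_in Q x a2 B.2.
  by apply: col_interval_closed closedQ _ _ => [|z hz]; [apply: rowQ | apply: rect].
exact: colQ.
Qed.

Lemma rect_in_sub P Q A B : Q `<=` P -> rect_in Q A B -> rect_in P A B.
Proof. by move=> /fsubsetP QP rect x y hx hy; apply/QP/rect. Qed.

Lemma rect_in_corners P A B : rect_in P A B ->
  [/\ A \in P, B \in P, (A.1, B.2) \in P & (B.1, A.2) \in P].
Proof. by case: A B => [a1 a2] [b1 b2] rect; split; apply: rect => /=; lia. Qed.

End Geometry.

Lemma separatedC P1 P2 : separated P1 P2 -> separated P2 P1.
Proof. by move=> sep A B AP2 BP1; rewrite eq_sym share_edgeC; apply: sep. Qed.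

Lemma separated_disjoint P1 P2 : separated P1 P2 -> [disjoint P1 & P2].
Proof.
by move=> sep; apply/fdisjointP => A AP1; apply/negP => /(sep A A AP1); rewrite eqxx.
Qed.

Lemma separated_edge_closed P1 P2 : separated P1 P2 -> edge_closed (P1 `|` P2) P1.
Proof.
move=> sep A B AP1; rewrite in_fsetU => /orP[//|BP2] edge.
by move: (sep A B AP1 BP2); rewrite edge andbF.
Qed.

Lemma separated_edge_closedr P1 P2 : separated P1 P2 -> edge_closed (P1 `|` P2) P2.
Proof. by rewrite fsetUC => /separatedC /separated_edge_closed. Qed.

Lemma rook_config_sub P Q C : Q `<=` P -> rook_config P C -> rook_config Q (C `&` Q).
Proof.
move=> QP [_ no_attack]; split=> [|A B]; first exact: fsubsetIr.
rewrite !in_fsetI => /andP[AC _] /andP[BC _] neqAB /(attacking_sub QP).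
exact: no_attack.
Qed.

Lemma rook_config_separated P1 P2 C : separated P1 P2 -> C `<=` P1 `|` P2 ->
  rook_config (P1 `|` P2) C <-> rook_config P1 (C `&` P1) /\ rook_config P2 (C `&` P2).
Proof.
move=> sep CP; split=> [conf|[conf1 conf2]].
  by split; apply: rook_config_sub conf; rewrite ?fsubsetUl ?fsubsetUr.
split=> // A B AC BC neqAB attackAB.
have no_attack Q : edge_closed (P1 `|` P2) Q -> rook_config Q (C `&` Q) -> A \notin Q.
  move=> closedQ [_ confQ]; apply/negP => AQ.
  have attackQ := attacking_closed closedQ AQ attackAB.
  by apply: (confQ A B _ _ neqAB attackQ);
    rewrite in_fsetI ?AC ?BC ?AQ ?(attacking_mem attackQ).
have := fsubsetP CP A AC; rewrite in_fsetU.
by rewrite (negPf (no_attack _ (separated_edge_closed sep) conf1))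
  (negPf (no_attack _ (separated_edge_closedr sep) conf2)).
Qed.

Definition switch (C : {fset cell}) (A B : cell) : {fset cell} :=
  ((C `\ A) `\ B) `|` [fset (A.1, B.2); (B.1, A.2)].

Lemma switch_stepP P C C' : switch_step P C C' <->
  exists A B, [/\ A \in C, B \in C, (A.1 != B.1) && (A.2 != B.2), rect_in P A B &
                  C' = switch C A B].
Proof. by []. Qed.

Lemma switch_fsetI C Q A B : rect_in Q A B -> switch C A B `&` Q = switch (C `&` Q) A B.
Proof.
move=> /rect_in_corners[_ _ cornerAB cornerBA]; apply/fsetP => z; rewrite !inE.
have [->|_] := eqVneq z (A.1, B.2); first by rewrite cornerAB !orbT.
have [->|_] := eqVneq z (B.1, A.2); first by rewrite cornerBA !orbT.
by rewrite !orbF -!andbA.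
Qed.

Lemma switch_fsetI_disjoint C Q R A B : rect_in Q A B -> [disjoint Q & R] ->
  switch C A B `&` R = C `&` R.
Proof.
move=> /rect_in_corners[AQ BQ cornerAB cornerBA] /fdisjointP disj.
apply/fsetP => z; rewrite !inE; case: (boolP (z \in R)) => [zR|]; rewrite ?andbF ?andbT //.
have out c : c \in Q -> (z == c) = false.
  by move=> cQ; apply: contraNF (disj c cQ) => /eqP <-.
by rewrite !out ?orbF.
Qed.

Lemma switch_fsetUr C Z A B : A \notin Z -> B \notin Z ->
  switch (C `|` Z) A B = switch C A B `|` Z.
Proof.
move=> AZ BZ; apply/fsetP => z; rewrite !inE.
case: (boolP (z \in Z)) => [zZ|]; last by rewrite !orbF.
have out c : c \notin Z -> (z == c) = false by move=> cZ; apply: contraNF cZ => /eqP <-.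
by rewrite (out A AZ) (out B BZ) !orbT.
Qed.

Lemma switch_step_local P Q R C A B : edge_closed P Q -> [disjoint Q & R] ->
  A \in Q -> A \in C -> B \in C -> (A.1 != B.1) && (A.2 != B.2) -> rect_in P A B ->
  switch_step Q (C `&` Q) (switch C A B `&` Q) /\ switch C A B `&` R = C `&` R.
Proof.
move=> closedQ disj AQ AC BC neqAB rect.
have rectQ := rect_in_closed closedQ AQ rect.
have [_ BQ _ _] := rect_in_corners rectQ.
split; last exact: switch_fsetI_disjoint rectQ disj.
by apply/switch_stepP; exists A, B; rewrite !in_fsetI AC BC AQ BQ (switch_fsetI _ rectQ).
Qed.

Lemma switch_step_restrict P1 P2 C C' : separated P1 P2 ->
  switch_step (P1 `|` P2) C C' -> switch_equiv P1 (C `&` P1) (C' `&` P1).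
Proof.
move=> sep /switch_stepP[A [B [AC BC neqAB rect ->]]].
have [AP _ _ _] := rect_in_corners rect.
case/fsetUP: AP => [AP1|AP2].
  have closed1 := separated_edge_closed sep.
  apply: rt_step.
  exact: (switch_step_local closed1 (separated_disjoint sep) AP1 AC BC neqAB rect).1.
have disj : [disjoint P2 & P1] by rewrite fdisjoint_sym separated_disjoint.
rewrite (switch_step_local (separated_edge_closedr sep) disj AP2 AC BC neqAB rect).2.
exact: rt_refl.
Qed.

Lemma switch_equiv_restrict P1 P2 C D : separated P1 P2 ->
  switch_equiv (P1 `|` P2) C D -> switch_equiv P1 (C `&` P1) (D `&` P1).
Proof.
move=> sep; apply: (clos_rt_map (f := fun X => X `&` P1)) => X Y.
exact: switch_step_restrict.
Qed.

Lemma switch_step_fsetUr P Q C C' Z : Q `<=` P -> [disjoint Q & Z] ->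
  switch_step Q C C' -> switch_step P (C `|` Z) (C' `|` Z).
Proof.
move=> QP /fdisjointP disj /switch_stepP[A [B [AC BC neqAB rect ->]]].
have [AQ BQ _ _] := rect_in_corners rect.
apply/switch_stepP; exists A, B; rewrite !in_fsetU AC BC switch_fsetUr ?disj //.
by split=> //; apply: rect_in_sub rect.
Qed.

Lemma switch_equiv_fsetUr P Q C C' Z : Q `<=` P -> [disjoint Q & Z] ->
  switch_equiv Q C C' -> switch_equiv P (C `|` Z) (C' `|` Z).
Proof.
move=> QP disj; apply: (clos_rt_map (f := fun X => X `|` Z)) => X Y step.
by apply: rt_step; apply: switch_step_fsetUr step.
Qed.

Lemma switch_equiv_separated P1 P2 C D : separated P1 P2 ->
  C `<=` P1 `|` P2 -> D `<=` P1 `|` P2 ->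
  switch_equiv (P1 `|` P2) C D <->
  switch_equiv P1 (C `&` P1) (D `&` P1) /\ switch_equiv P2 (C `&` P2) (D `&` P2).
Proof.
move=> sep CP DP; split=> [equiv|[equiv1 equiv2]].
  split; first exact: switch_equiv_restrict equiv.
  by apply: (switch_equiv_restrict (separatedC sep)); rewrite fsetUC.
have disj12 := separated_disjoint sep.
have disj21 := separated_disjoint (separatedC sep).
rewrite (fsetI_cover CP) (fsetI_cover DP).
apply: (rt_trans _ _ _ ((D `&` P1) `|` (C `&` P2))).
  apply: switch_equiv_fsetUr equiv1; first exact: fsubsetUl.
  exact: fdisjointWr (fsubsetIr _ _) disj12.
rewrite !(fsetUC (D `&` P1)); apply: switch_equiv_fsetUr equiv2; first exact: fsubsetUr.
exact: fdisjointWr (fsubsetIr _ _) disj21.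
Qed.

Lemma switch_step_card P C C' : switch_step P C C' -> (#|` C'| <= #|` C|)%N.
Proof.
move=> /switch_stepP[A [B [AC BC /andP[neq1 _] _ ->]]].
have neqAB : A != B by apply: contraNneq neq1 => ->.
rewrite [in X in (_ <= X)%N](cardfsD1 A) AC (cardfsD1 B (C `\ A)) in_fsetD1 BC eq_sym neqAB.
apply: leq_trans (leq_card_fsetU _ _).1 _.
by rewrite cardfs2 addnC !add1n; case: (_ != _).
Qed.

Lemma switch_equiv_card P C D : switch_equiv P C D -> (#|` D| <= #|` C|)%N.
Proof.
elim=> [{}C {}D /switch_step_card //|//|{}C E {}D _ le_EC _ le_DE].
exact: leq_trans le_DE le_EC.
Qed.

Definition switch_classes (P : {fset cell}) (k : nat) : {fset {fset {fset cell}}} :=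
  [fset switch_class P k C | C in rook_configs P k].

Lemma in_rook_configs P k C :
  (C \in rook_configs P k) = [&& C `<=` P, `[< rook_config P C >] & #|` C| == k].
Proof. by rewrite in_fset !inE /= fpowersetE. Qed.

Lemma in_switch_class P k C D :
  (D \in switch_class P k C) = (D \in rook_configs P k) && `[< switch_equiv P C D >].
Proof. by rewrite in_fset !inE. Qed.

Lemma switch_rook_countE P k : switch_rook_count P k = #|` switch_classes P k|.
Proof.
congr #|` _|; apply/fsetP => S; rewrite in_fset !inE /= fpowersetE.
apply/andP/imfsetP => [[_ /asboolP[C CP ->]]|[C CP ->]]; first by exists C.
split; last by apply/asboolP; exists C.
by apply/fsubsetP => D; rewrite in_switch_class => /andP[].
Qed.

(* Switching is in fact symmetric, but [switch_equiv] is only defined as a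
   reflexive-transitive closure, hence the two-way condition. *)
Lemma switch_class_eq P k C D : C \in rook_configs P k -> D \in rook_configs P k ->
  (switch_class P k C == switch_class P k D) =
  `[< switch_equiv P C D /\ switch_equiv P D C >].
Proof.
move=> CP DP; apply/eqP/asboolP => [eqCD|[CD DC]].
  have self E : E \in rook_configs P k -> E \in switch_class P k E.
    by move=> EP; rewrite in_switch_class EP; apply/asboolP; apply: rt_refl.
  have := self D DP; rewrite -eqCD in_switch_class => /andP[_ /asboolP CD].
  by have := self C CP; rewrite eqCD in_switch_class => /andP[_ /asboolP].
apply/fsetP => E; rewrite 2!in_switch_class; case: (E \in rook_configs P k) => //.
by apply/asboolP/asboolP => equiv; apply: rt_trans equiv.
Qed.

Lemma rook_configs0 P : rook_configs P 0 = [fset fset0].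
Proof.
apply/fsetP => C; rewrite in_rook_configs inE cardfs_eq0.
case: eqP => [->|_]; last by rewrite !andbF.
by rewrite fsub0set andbT; apply/asboolP; split=> [|A B]; rewrite ?fsub0set ?inE.
Qed.

Lemma rook_configs_gt P k : (#|` P| < k)%N -> rook_configs P k = fset0.
Proof.
move=> lt_Pk; apply/fsetP => C; rewrite in_rook_configs inE.
apply/negbTE; apply: contraTN lt_Pk => /and3P[CP _ /eqP <-].
by rewrite -leqNgt fsubset_leq_card.
Qed.

Lemma switch_rook_count0 P : switch_rook_count P 0 = 1%N.
Proof.
by rewrite switch_rook_countE /switch_classes rook_configs0 imfset_fset1 cardfs1.
Qed.

Section Polynomial.
Local Open Scope ring_scope.

Lemma coef_switching_rook_poly P k :
  (switching_rook_poly P)`_k = (switch_rook_count P k)%:R.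
Proof.
have -> : switching_rook_poly P =
    \poly_(i < (rook_number P).+1) (switch_rook_count P i)%:R by rewrite poly_def.
rewrite coef_poly; case: ltnP => // lt_rk.
rewrite switch_rook_countE /switch_classes.
suff -> : rook_configs P k = fset0 by rewrite imfset0 cardfs0.
apply/eqP; apply: contraTT lt_rk => /fset0Pn[C]; rewrite -leqNgt in_rook_configs.
case/and3P=> CP confC /eqP <-.
have le_CP : (#|` C| < (#|` P|).+1)%N by rewrite ltnS fsubset_leq_card.
apply: (@leq_bigmax_cond _ (fun i : 'I_(#|` P|).+1 => rook_configs P i != fset0)
  (fun i => nat_of_ord i) (Ordinal le_CP)).
by apply/fset0Pn; exists C; rewrite in_rook_configs CP confC /=.
Qed.

Lemma switching_rook_poly0 : switching_rook_poly fset0 = 1.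
Proof.
apply/polyP => k; rewrite coef_switching_rook_poly coef1.
case: k => [|k]; first by rewrite switch_rook_count0.
by rewrite switch_rook_countE /switch_classes rook_configs_gt ?imfset0 ?cardfs0.
Qed.

End Polynomial.

Section Separated.
Variables P1 P2 : {fset cell}.
Hypothesis sepP : separated P1 P2.

Lemma card_fsetI_separated C :
  C `<=` P1 `|` P2 -> #|` C| = (#|` C `&` P1| + #|` C `&` P2|)%N.
Proof.
move=> CP; rewrite {1}(fsetI_cover CP); apply/eqP; rewrite (leq_card_fsetU _ _).2.
exact: fdisjointWl (fsubsetIr _ _) (fdisjointWr (fsubsetIr _ _) (separated_disjoint sepP)).
Qed.

Lemma rook_configs_separated C k : C \in rook_configs (P1 `|` P2) k ->
  [/\ C `&` P1 \in rook_configs P1 #|` C `&` P1|,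
      C `&` P2 \in rook_configs P2 (k - #|` C `&` P1|) & (#|` C `&` P1| <= k)%N].
Proof.
rewrite in_rook_configs => /and3P[CP /asboolP conf /eqP <-].
have [conf1 conf2] := (rook_config_separated sepP CP).1 conf.
rewrite !in_rook_configs !fsubsetIr (card_fsetI_separated CP) addKn leq_addr !eqxx !andbT.
by split=> //; apply/asboolP.
Qed.

Lemma rook_configs_fsetU C1 C2 k1 k2 :
  C1 \in rook_configs P1 k1 -> C2 \in rook_configs P2 k2 ->
  [/\ C1 `|` C2 \in rook_configs (P1 `|` P2) (k1 + k2),
      (C1 `|` C2) `&` P1 = C1 & (C1 `|` C2) `&` P2 = C2].
Proof.
rewrite !in_rook_configs => /and3P[C1P /asboolP conf1 /eqP <-].
move=> /and3P[C2P /asboolP conf2 /eqP <-].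
have disj12 := separated_disjoint sepP.
have disj21 := separated_disjoint (separatedC sepP).
have E1 : (C1 `|` C2) `&` P1 = C1.
  by rewrite fsetIUl (fsetIidPl C1P) disjoint_fsetI0 ?fsetU0 // (fdisjointWl C2P disj21).
have E2 : (C1 `|` C2) `&` P2 = C2.
  by rewrite fsetIUl (fsetIidPl C2P) disjoint_fsetI0 ?fset0U // (fdisjointWl C1P disj12).
have CP : C1 `|` C2 `<=` P1 `|` P2 by apply: fsetUSS.
split=> //; rewrite CP (card_fsetI_separated CP) E1 E2 eqxx andbT /=.
by apply/asboolP/(rook_config_separated sepP CP); rewrite E1 E2.
Qed.

Definition class_triple k (C : {fset cell}) :
    nat * ({fset {fset cell}} * {fset {fset cell}}) :=
  (#|` C `&` P1|, (switch_class P1 #|` C `&` P1| (C `&` P1),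
                   switch_class P2 (k - #|` C `&` P1|) (C `&` P2))).

Lemma class_triple_ker k C D :
  C \in rook_configs (P1 `|` P2) k -> D \in rook_configs (P1 `|` P2) k ->
  (switch_class (P1 `|` P2) k C == switch_class (P1 `|` P2) k D) =
  (class_triple k C == class_triple k D).
Proof.
move=> CP DP; rewrite switch_class_eq // /class_triple !xpair_eqE.
have [C1P C2P _] := rook_configs_separated CP.
have [D1P D2P _] := rook_configs_separated DP.
have subC : C `<=` P1 `|` P2 by move: CP; rewrite in_rook_configs => /and3P[].
have subD : D `<=` P1 `|` P2 by move: DP; rewrite in_rook_configs => /and3P[].
apply/asboolP/idP => [[/(switch_equiv_separated sepP subC subD)[CD1 CD2]
                      /(switch_equiv_separated sepP subD subC)[DC1 DC2]]|].
  have eq_card : #|` C `&` P1| = #|` D `&` P1|.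
    by apply/eqP; rewrite eqn_leq (switch_equiv_card DC1) (switch_equiv_card CD1).
  rewrite -eq_card in D1P D2P *; rewrite eqxx andTb !switch_class_eq //.
  by apply/andP; split; apply/asboolP; split.
case/and3P => /eqP eq_card; rewrite -eq_card in D1P D2P *.
rewrite !switch_class_eq // => /asboolP[CD1 DC1] /asboolP[CD2 DC2].
by split; apply/(switch_equiv_separated sepP).
Qed.

Lemma switch_rook_count_separated k : switch_rook_count (P1 `|` P2) k =
  (\sum_(i < k.+1) switch_rook_count P1 i * switch_rook_count P2 (k - i))%N.
Proof.
rewrite switch_rook_countE (card_imfset_ker (g := class_triple k)); last first.
  by move=> C D CP DP; apply: class_triple_ker.
under eq_bigr do rewrite !switch_rook_countE.
apply: (card_fset_sigma (A := switch_classes P1) (B := fun i => switch_classes P2 (k - i))).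
move=> i S1 S2; apply/imfsetP/and3P => [[C CP [-> -> ->]]|[le_ik S1P S2P]].
  have [C1P C2P le_k] := rook_configs_separated CP.
  by split; rewrite ?ltnS //; apply/imfsetP; [exists (C `&` P1) | exists (C `&` P2)].
case/imfsetP: S1P => C1 C1P ->; case/imfsetP: S2P => C2 C2P ->.
have [CP E1 E2] := rook_configs_fsetU C1P C2P.
have le_ik' : (i <= k)%N by rewrite -ltnS.
rewrite (subnKC le_ik') in CP; exists (C1 `|` C2); first exact: CP.
move: C1P; rewrite in_rook_configs => /and3P[_ _ /eqP card_C1].
by rewrite /class_triple E1 E2 card_C1.
Qed.

Lemma switching_rook_poly_separated :
  switching_rook_poly (P1 `|` P2) = (switching_rook_poly P1 * switching_rook_poly P2)%R.
Proof.
apply/polyP => k.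
rewrite coefM coef_switching_rook_poly switch_rook_count_separated natr_sum.
by apply: eq_bigr => i _; rewrite natrM !coef_switching_rook_poly.
Qed.

End Separated.

Lemma switching_rook_poly_bigfcup (Ps : seq {fset cell}) : uniq Ps ->
  {in Ps &, forall Q Q', Q != Q' -> separated Q Q'} ->
  (\prod_(Q <- Ps) switching_rook_poly Q)%R = switching_rook_poly (\bigcup_(Q <- Ps) Q).
Proof.
elim: Ps => [|Q Ps IH]; first by rewrite !big_nil switching_rook_poly0.
rewrite cons_uniq => /andP[QPs uniqPs] sepPs.
have sepPs' : {in Ps &, forall Q Q', Q != Q' -> separated Q Q'}.
  by move=> Q1 Q2 Q1Ps Q2Ps; apply: sepPs; rewrite inE ?Q1Ps ?Q2Ps orbT.
rewrite !big_cons IH // switching_rook_poly_separated // => A B AQ.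
case/bigfcupP => Q' /andP[Q'Ps _] BQ'.
apply: (sepPs Q Q') => //; rewrite ?inE ?eqxx ?Q'Ps ?orbT //.
by apply: contraNneq QPs => ->.
Qed.

Definition edge_connected (X : {fset cell}) (A B : cell) : Prop :=
  exists s : seq cell, [/\ all (fun C => C \in X) s, path share_edge A s & last A s = B].

Lemma edge_connected_refl X A : edge_connected X A A.
Proof. by exists [::]. Qed.

Lemma edge_connected_edge X A B : B \in X -> share_edge A B -> edge_connected X A B.
Proof. by move=> BX edge; exists [:: B]; rewrite /= BX edge. Qed.

Lemma edge_connected_trans X A B C :
  edge_connected X A B -> edge_connected X B C -> edge_connected X A C.
Proof.
move=> [s [sX pathAs <-]] [t [tX pathBt <-]]; exists (s ++ t).
by rewrite all_cat cat_path last_cat sX tX pathAs pathBt.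
Qed.

Lemma edge_connected_sub X Y A B : X `<=` Y -> edge_connected X A B -> edge_connected Y A B.
Proof.
move=> /fsubsetP XY [s [sX pathAs lastAs]]; exists s; split=> //.
by apply: sub_all sX => C /XY.
Qed.

Lemma polyomino_edge_connected X A B : polyomino X -> A \in X -> B \in X ->
  edge_connected X A B.
Proof. by move=> [_ conn] AX BX; have [s [? _ ? ?]] := conn A B AX BX; exists s. Qed.

Lemma edge_connected_polyomino X : X != fset0 ->
  (forall A B, A \in X -> B \in X -> edge_connected X A B) -> polyomino X.
Proof.
move=> X0 conn; split=> [|A B AX BX]; first split=> // A B AX BX.
  have [s [sX pathAs lastAs]] := conn A B AX BX; exists s; split=> //.
  by apply: sub_path pathAs; rewrite /share_edge /share_vertex => C D; lia.
have [s [sX pathAs <-]] := conn A B AX BX.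
case/shortenP: pathAs => s' pathAs' uniqAs' subs'; exists s'; split=> //.
by apply/allP => C /subs' Cs; apply: (allP sX).
Qed.

Lemma polyomino_fset1 A : polyomino [fset A].
Proof.
apply: edge_connected_polyomino => [|B C]; first by apply/fset0Pn; exists A; rewrite inE.
by rewrite !inE => /eqP -> /eqP ->; apply: edge_connected_refl.
Qed.

Lemma polyomino_fsetU Q1 Q2 a b : polyomino Q1 -> polyomino Q2 ->
  a \in Q1 -> b \in Q2 -> (a == b) || share_edge a b -> polyomino (Q1 `|` Q2).
Proof.
move=> poly1 poly2 aQ1 bQ2 ab.
have conn_in Q : polyomino Q -> Q `<=` Q1 `|` Q2 ->
    forall A B, A \in Q -> B \in Q -> edge_connected (Q1 `|` Q2) A B.
  move=> polyQ QU A B AQ BQ.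
  exact: edge_connected_sub QU (polyomino_edge_connected polyQ AQ BQ).
have conn1 := conn_in _ poly1 (fsubsetUl _ _).
have conn2 := conn_in _ poly2 (fsubsetUr _ _).
have [ab_conn ba_conn] : edge_connected (Q1 `|` Q2) a b /\ edge_connected (Q1 `|` Q2) b a.
  case/orP: ab => [/eqP ->|edge]; first by split; apply: edge_connected_refl.
  by split; apply: edge_connected_edge; rewrite ?in_fsetU ?aQ1 ?bQ2 ?orbT // share_edgeC.
have from_a B : B \in Q1 `|` Q2 -> edge_connected (Q1 `|` Q2) a B.
  case/fsetUP => BQ; first exact: conn1.
  exact: edge_connected_trans ab_conn (conn2 _ _ bQ2 BQ).
have to_a A : A \in Q1 `|` Q2 -> edge_connected (Q1 `|` Q2) A a.
  case/fsetUP => AQ; first exact: conn1.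
  exact: edge_connected_trans (conn2 _ _ AQ bQ2) ba_conn.
apply: edge_connected_polyomino => [|A B AQ BQ].
  by apply/fset0Pn; exists a; rewrite in_fsetU aQ1.
exact: edge_connected_trans (to_a A AQ) (from_a B BQ).
Qed.

Lemma connected_components_separated P Q Q' :
  connected_component P Q -> connected_component P Q' -> Q != Q' -> separated Q Q'.
Proof.
move=> [QP polyQ maxQ] [Q'P polyQ' maxQ'] neqQQ' A B AQ BQ'.
apply: contraNT neqQQ'; rewrite negb_and !negbK => touch.
have polyU := polyomino_fsetU polyQ polyQ' AQ BQ' touch.
have UP : Q `|` Q' `<=` P by rewrite fsubUset QP Q'P.
by rewrite -(maxQ _ (fsubsetUl _ _) UP polyU) (maxQ' _ (fsubsetUr _ _) UP polyU).
Qed.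

Lemma exists_connected_component P A : A \in P ->
  exists2 Q, connected_component P Q & A \in Q.
Proof.
(* A polyomino of [P] through [A] of maximal cardinality is maximal for inclusion. *)
move=> AP.
pose size_ok n := `[< exists Q, [/\ Q `<=` P, polyomino Q, A \in Q & #|` Q| = n] >].
have ex_size : exists n, size_ok n.
  exists 1%N; apply/asboolP; exists [fset A].
  by split; rewrite ?fsub1set ?in_fset1 ?cardfs1 //; apply: polyomino_fset1.
have size_bound n : size_ok n -> (n <= #|` P|)%N.
  by move=> /asboolP[Q [QP _ _ <-]]; apply: fsubset_leq_card.
case: (ex_maxnP ex_size size_bound) => m /asboolP[Q [QP polyQ AQ <-]] maxQ.
exists Q => //; split=> // Q' QQ' Q'P polyQ'; apply/eqP; rewrite eq_sym eqEfcard QQ'.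
by apply: maxQ; apply/asboolP; exists Q'; rewrite (fsubsetP QQ').
Qed.

Theorem lemma1p1 (P : {fset cell}) (Ps : seq {fset cell}) :
  collection P ->
  uniq Ps ->
  (forall Q : {fset cell}, Q \in Ps <-> connected_component P Q) ->
  (\prod_(Q <- Ps) switching_rook_poly Q)%R = switching_rook_poly P.
Proof.
move=> _ uniqPs compPs.
rewrite switching_rook_poly_bigfcup //; last first.
  move=> Q Q' /compPs compQ /compPs compQ'.
  exact: connected_components_separated compQ compQ'.
congr switching_rook_poly; apply/fsetP => A.
apply/bigfcupP/idP => [[Q /andP[/compPs[QP _ _] _]]|AP].
  exact: (fsubsetP QP).
by have [Q /compPs QPs AQ] := exists_connected_component AP; exists Q; rewrite ?QPs.
Qed.
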